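(* Let $k,x_T,k_{\mathrm{on}},k_{\mathrm{off}}>0$ be constants, let $f_1,\ldots,f_n$ be functions of $(x_1,\ldots,x_n)$, and consider the system $$\dot I = k_{\mathrm{off}}x_1 - k_{\mathrm{on}} I - \lambda(C,x_1,I),\qquad \dot x_1 = f_1(x_1,\ldots,x_n) - k_{\mathrm{off}}x_1 + k_{\mathrm{on}} I + \lambda(C,x_1,I),\qquad \dot x_i = f_i(x_1,\ldots,x_n)\ (i=2,\ldots,n),$$ with the conservation law $x_1+I=x_T$, where $\dot C=h(C)$ with $C\ge 0$, and either $\lambda(C,x_1,I)=kIC$ (activation) or $\lambda(C,x_1,I)=-kx_1C$ (inhibition). Eliminating the variable $I$ yields the system $\dot{\mathbf x} = \mathbf f(\mathbf x)+\hat{\mathbf e}_1 g(u,x_1)$ with $u=kC$, where $g(u,x_1)=(u+k_{\mathrm{on}})(x_T-x_1)-k_{\mathrm{off}}x_1$ in the activation case and $g(u,x_1)=k_{\mathrm{on}}(x_T-x_1)-(u+k_{\mathrm{off}})x_1$ in the inhibition case. Moreover, the interval $[0,x_T]$ is forward-invariant for $x_1$, and at any steady state $x_1\neq 0$ and $x_1\neq x_T$.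
   Context: $\mathbf f=(f_1,\ldots,f_n)^\top$ and $\hat{\mathbf e}_1$ is the first standard basis vector of $\mathbb R^n$. $I$ is interpreted as the concentration of the inactive form of species $X_1$ and $C$ as the concentration of an external species. *)

(* concrete reals R, Coquelicot derivatives; mathcomp ordinals
   'I_n.+1 index the species x_1..x_{n+1} (x_1 = ord0). *)
From Stdlib Require Import Reals.
From Coquelicot Require Import Coquelicot.
From mathcomp Require Import ssreflect ssrfun ssrbool eqtype ssrnat fintype.
Open Scope R_scope.

Inductive regulation := Activation | Inhibition.

Definition lam (m : regulation) (k C x1 I : R) : R :=
  match m with
  | Activation => k * I * C
  | Inhibition => - (k * x1 * C)
  end.

Definition gfun (m : regulation) (kon koff xT u x1 : R) : R :=
  match m with
  | Activation => (u + kon) * (xT - x1) - koff * x1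
  | Inhibition => kon * (xT - x1) - (u + koff) * x1
  end.

Definition e1 {n : nat} (i : 'I_n.+1) : R := if i == ord0 then 1 else 0.

Definition rhs_x (m : regulation) {n : nat} (k kon koff : R)
  (f : ('I_n.+1 -> R) -> 'I_n.+1 -> R) (C : R) (x : 'I_n.+1 -> R) (I : R)
  (i : 'I_n.+1) : R :=
  if i == ord0 then f x i - koff * x ord0 + kon * I + lam m k C (x ord0) I
  else f x i.

Definition rhs_I (m : regulation) (k kon koff C x1 I : R) : R :=
  koff * x1 - kon * I - lam m k C x1 I.

Definition full_solution (m : regulation) {n : nat} (k xT kon koff : R)
  (h : R -> R) (f : ('I_n.+1 -> R) -> 'I_n.+1 -> R)
  (C I : R -> R) (x : R -> 'I_n.+1 -> R) : Prop :=
  forall t, 0 <= t ->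
    is_derive C t (h (C t)) /\
    is_derive I t (rhs_I m k kon koff (C t) (x t ord0) (I t)) /\
    (forall i, is_derive (fun s => x s i) t
                 (rhs_x m k kon koff f (C t) (x t) (I t) i)) /\
    0 <= C t /\
    x t ord0 + I t = xT.

(* Along a solution the conservation law gives x1 = xT - I, so that both
   -dI/dt and the extra term in dx1/dt equal g(kC, x1).  For u >= 0 we have
   g(u, 0) > 0 > g(u, xT): the flow of I points strictly into [0, xT] at both
   endpoints, which yields forward invariance by a first-exit-time argument
   and excludes steady states on the boundary. *)

From Stdlib Require Import Reals Lra.
From Coquelicot Require Import Coquelicot.
From mathcomp Require Import ssreflect ssrfun ssrbool eqtype ssrnat fintype.
Open Scope R_scope.

Lemma continuity_pt_Rabs {F : R -> R} {s : R} : continuity_pt F s ->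
  forall eps, 0 < eps ->
  exists d, 0 < d /\ forall y, Rabs (y - s) < d -> Rabs (F y - F s) < eps.
Proof.
move=> /continuity_pt_locally HF eps Heps.
have [d Hd] := HF (mkposreal eps Heps).
by exists d; split => [|y Hy]; [exact: cond_pos | exact: Hd].
Qed.

Lemma is_derive_continuity_pt {F : R -> R} {s l : R} :
  is_derive F s l -> continuity_pt F s.
Proof.
move=> HF; apply/continuity_pt_filterlim/ex_derive_continuous.
by exists l.
Qed.

Lemma is_derive_neg_decr_right {F : R -> R} {s l : R} :
  is_derive F s l -> l < 0 ->
  exists d, 0 < d /\ forall h, 0 < h < d -> F (s + h) < F s.
Proof.
move=> /is_derive_Reals HF Hl.
have [d Hd] := HF (- l / 2) ltac:(lra).
exists d; split => [|h Hh]; first exact: cond_pos.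
have /Rabs_def2 [Hq _] := Hd h ltac:(lra) ltac:(rewrite Rabs_right; lra).
have Hquot : (F (s + h) - F s) / h < 0 by lra.
have : (F (s + h) - F s) / h * h < 0 by nra.
by rewrite /Rdiv Rmult_assoc Rinv_l; lra.
Qed.

Lemma is_derive_le_right {F : R -> R} {s t b l : R} :
  is_derive F s l -> F s <= b -> (F s = b -> l < 0) -> s < t ->
  exists u, s < u <= t /\ F u <= b.
Proof.
move=> HF Hle Hl Hst.
have [d [Hd Hright]] : exists d, 0 < d /\ forall h, 0 < h < d -> F (s + h) <= b.
{ case: Hle => [Hlt|Heq].
  - have [d [Hd Hnear]] :=
      continuity_pt_Rabs (is_derive_continuity_pt HF) (b - F s) ltac:(lra).
    exists d; split => // h Hh.
    have /Rabs_def2 := Hnear (s + h) ltac:(rewrite Rabs_right; lra).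
    lra.
  - have [d [Hd Hdecr]] := is_derive_neg_decr_right HF (Hl Heq).
    exists d; split => // h Hh.
    have := Hdecr h Hh; lra. }
have Hmin_d := Rmin_l (d / 2) (t - s).
have Hmin_t := Rmin_r (d / 2) (t - s).
have Hmin_pos : 0 < Rmin (d / 2) (t - s) by apply: Rmin_pos; lra.
exists (s + Rmin (d / 2) (t - s)); split; first lra.
by apply: Hright; lra.
Qed.

Lemma is_derive_barrier_le (F F' : R -> R) (t0 b : R) :
  (forall t, t0 <= t -> is_derive F t (F' t)) -> F t0 <= b ->
  (forall t, t0 <= t -> F t = b -> F' t < 0) ->
  forall t, t0 <= t -> F t <= b.
Proof.
move=> HF H0 Hb t Ht; apply: Rnot_lt_le => Hgt.
pose A u := t0 <= u <= t /\ F u <= b.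
have [s [Hub Hlub]] : {s | is_lub A s}.
{ apply: completeness; first by exists t => u [[_ ?] _].
  by exists t0; split; [lra|]. }
have Hs0 : t0 <= s by apply: Hub; split; [lra|].
have Hst : s <= t by apply: Hlub => u [[_ ?] _].
(* the set [A] is closed, so it contains its supremum *)
have HFs : F s <= b.
{ apply: Rnot_lt_le => Hlt.
  have [d [Hd Hnear]] :=
    continuity_pt_Rabs (is_derive_continuity_pt (HF s Hs0)) (F s - b) ltac:(lra).
  have : s <= s - d; last lra.
  apply: Hlub => u [[Hu0 Hut] Hu]; apply: Rnot_lt_le => Hlt'.
  have Hus : u <= s by apply: Hub.
  have /Rabs_def2 := Hnear u ltac:(rewrite Rabs_left1; lra).
  lra. }
have Hlt : s < t by case: Hst => // Heq; rewrite Heq in HFs; lra.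
have [u [[Hsu Hut] Hu]] := is_derive_le_right (HF s Hs0) HFs (Hb s Hs0) Hlt.
have : u <= s by apply: Hub; split; [lra|].
lra.
Qed.

Lemma is_derive_barrier_ge (F F' : R -> R) (t0 b : R) :
  (forall t, t0 <= t -> is_derive F t (F' t)) -> b <= F t0 ->
  (forall t, t0 <= t -> F t = b -> 0 < F' t) ->
  forall t, t0 <= t -> b <= F t.
Proof.
move=> HF H0 Hb t Ht; apply: Ropp_le_cancel.
apply: (is_derive_barrier_le (fun u => - F u) (fun u => - F' u) t0 (- b)) => //.
- by move=> u Hu; apply: is_derive_opp; exact: HF.
- lra.
- by move=> u Hu HFu; have := Hb u Hu ltac:(lra); lra.
Qed.

Lemma gfun_pos_at_0 (m : regulation) (kon koff xT u : R) :
  0 <= u -> 0 < kon -> 0 < xT -> 0 < gfun m kon koff xT u 0.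
Proof. by case: m => /= *; nra. Qed.

Lemma gfun_neg_at_xT (m : regulation) (kon koff xT u : R) :
  0 <= u -> 0 < koff -> 0 < xT -> gfun m kon koff xT u xT < 0.
Proof. by case: m => /= *; nra. Qed.

Lemma rhs_I_conserved {m : regulation} {k kon koff xT C x1 I : R} :
  x1 + I = xT -> rhs_I m k kon koff C x1 I = - gfun m kon koff xT (k * C) x1.
Proof. by move=> <-; rewrite /rhs_I; case: m => /=; ring. Qed.

Lemma rhs_x_conserved {m : regulation} {n : nat} {k kon koff xT : R}
  {f : ('I_n.+1 -> R) -> 'I_n.+1 -> R} {C : R} {x : 'I_n.+1 -> R} {I : R}
  {i : 'I_n.+1} :
  x ord0 + I = xT ->
  rhs_x m k kon koff f C x I i
  = f x i + e1 i * gfun m kon koff xT (k * C) (x ord0).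
Proof.
by move=> <-; rewrite /rhs_x /e1; case: (i == ord0); case: m => /=; ring.
Qed.

Theorem lemma6 (m : regulation) (n : nat) (k xT kon koff : R)
  (hk : 0 < k) (hxT : 0 < xT) (hkon : 0 < kon) (hkoff : 0 < koff)
  (f : ('I_n.+1 -> R) -> 'I_n.+1 -> R) (h : R -> R) :
  (* eliminating I gives xdot = f(x) + e1 g(u, x1) with u = k C *)
  (forall (C I : R -> R) (x : R -> 'I_n.+1 -> R),
     full_solution m k xT kon koff h f C I x ->
     forall t, 0 <= t -> forall i,
       is_derive (fun s => x s i) t
         (f (x t) i + e1 i * gfun m kon koff xT (k * C t) (x t ord0))) /\
  (* [0, xT] is forward invariant for x1 *)
  (forall (C I : R -> R) (x : R -> 'I_n.+1 -> R),
     full_solution m k xT kon koff h f C I x ->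
     0 <= x 0 ord0 <= xT ->
     forall t, 0 <= t -> 0 <= x t ord0 <= xT) /\
  (* at any steady state, x1 <> 0 and x1 <> xT *)
  (forall (C I : R) (x : 'I_n.+1 -> R),
     0 <= C -> h C = 0 -> x ord0 + I = xT ->
     rhs_I m k kon koff C (x ord0) I = 0 ->
     (forall i, rhs_x m k kon koff f C x I i = 0) ->
     x ord0 <> 0 /\ x ord0 <> xT).
Proof.
have HkC C : 0 <= C -> 0 <= k * C by move=> HC; apply: Rmult_le_pos; lra.
split; [|split].
- move=> C I x Hsol t Ht i.
  have [_ [_ [Hx [_ Hcons]]]] := Hsol t Ht.
  by rewrite -(rhs_x_conserved Hcons); exact: Hx.
- move=> C I x Hsol H0 t Ht.
  have Hcons u : 0 <= u -> x u ord0 + I u = xT by move=> /Hsol [_ [_ [_ [_ ?]]]].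
  have HkCu u : 0 <= u -> 0 <= k * C u by move=> /Hsol [_ [_ [_ [/HkC ? _]]]].
  have HI u : 0 <= u -> is_derive I u (- gfun m kon koff xT (k * C u) (x u ord0)).
  { by move=> Hu0; have [_ [HI [_ [_ /rhs_I_conserved <-]]]] := Hsol u Hu0. }
  have Hcons0 := Hcons 0 (Rle_refl 0).
  have HIxT : I t <= xT.
  { apply: (is_derive_barrier_le _ _ _ _ HI) => // [|u Hu0 HIu]; first lra.
    have -> : x u ord0 = 0 by have := Hcons u Hu0; lra.
    have := gfun_pos_at_0 m kon koff xT _ (HkCu u Hu0) hkon hxT; lra. }
  have HI0 : 0 <= I t.
  { apply: (is_derive_barrier_ge _ _ _ _ HI) => // [|u Hu0 HIu]; first lra.
    have -> : x u ord0 = xT by have := Hcons u Hu0; lra.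
    have := gfun_neg_at_xT m kon koff xT _ (HkCu u Hu0) hkoff hxT; lra. }
  have := Hcons t Ht; lra.
- move=> C I x HC _ Hcons HI _.
  rewrite (rhs_I_conserved Hcons) in HI.
  split => Hx; rewrite Hx in HI.
  + by have := gfun_pos_at_0 m kon koff xT _ (HkC C HC) hkon hxT; lra.
  + by have := gfun_neg_at_xT m kon koff xT _ (HkC C HC) hkoff hxT; lra.
Qed.
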